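(* Let $I\subseteq\mathfrak{M}$ be an ideal, let $Z=\{z_1,\dots,z_s\}$ be a set of distinct indeterminates in $X$, let $\sigma$ be a $Z$-separating term ordering for $I$, and let $\{\frac1{c_1}f_1,\dots,\frac1{c_s}f_s,g_1,\dots,g_t\}$ be a $Z$-separating $\sigma$-Gröbner basis of $I$ (with $(f_1,\dots,f_s)$ coherently $Z$-separating, $c_i=\mathrm{LC}_\sigma(f_i)$, $z_i=\mathrm{LT}_\sigma(f_i)$, and $\{g_1,\dots,g_t\}$ the reduced $\hat\sigma$-Gröbner basis of $I\cap\widehat P$). Write $X\setminus Z=\{y_1,\dots,y_{n-s}\}$. (a) Let $\varphi:P\to\widehat P$ be the $K$-algebra homomorphism with $\varphi(x_i)=x_i$ if $x_i\notin Z$ and $\varphi(x_i)=\mathrm{tail}_{z_j}(f_j)$ if $x_i=z_j$. Then $\varphi$ induces a $K$-algebra isomorphism $\Phi:P/I\to\widehat P/(I\cap\widehat P)$, $\Phi(x_i+I)=\varphi(x_i)+(I\cap\widehat P)$. (b) The inverse $\Phi^{-1}$ is given by $y_i+(I\cap\widehat P)\mapsto y_i+I$ for $i=1,\dots,n-s$. (c) $\Phi$ and $\Phi^{-1}$ do not depend on the choice of the $Z$-separating $\sigma$-Gröbner basis of $I$; in particular they may be defined using the reduced $\sigma$-Gröbner basis of $I$.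
   Context: $K$ is a field, $P=K[x_1,\dots,x_n]$, $X=\{x_1,\dots,x_n\}$, $\mathfrak{M}=\langle x_1,\dots,x_n\rangle$, $\widehat P=K[X\setminus Z]$, $\hat\sigma$ the restriction of $\sigma$ to $\widehat P$. For $f\in P$, $\mathrm{indets}(f)$ is the set of indeterminates dividing some term in the support of $f$. For $f\in\mathfrak{M}$ with nonzero degree-one part $\mathrm{Lin}_{\mathfrak{M}}(f)$, $z\in\mathrm{indets}(\mathrm{Lin}_{\mathfrak M}(f))$, and $c\neq 0$ the coefficient of $z$ in $f$, set $\mathrm{tail}_z(f)=z-\frac1cf$; $f$ is $z$-separating if $z\notin\mathrm{indets}(\mathrm{tail}_z(f))$. A tuple $(f_1,\dots,f_s)$ of nonzero elements of $\mathfrak M$ is coherently $Z$-separating if each $f_i$ is $z_i$-separating and $z_i\notin\mathrm{indets}(f_j)$ for $j\ne i$. A term ordering $\sigma$ is a $Z$-separating term ordering for $I$ if there are $f_1,\dots,f_s\in I\setminus\{0\}$ with $z_i=\mathrm{LT}_\sigma(f_i)$ and $(f_1,\dots,f_s)$ coherently $Z$-separating. For such $\sigma$, a $Z$-separating $\sigma$-Gröbner basis of $I$ is a $\sigma$-Gröbner basis of the form $\{\frac1{c_1}f_1,\dots,\frac1{c_s}f_s,g_1,\dots,g_t\}$ with $(f_1,\dots,f_s)$ coherently $Z$-separating, $c_i=\mathrm{LC}_\sigma(f_i)$, $z_i=\mathrm{LT}_\sigma(f_i)$, and $\{g_1,\dots,g_t\}$ the reduced $\hat\sigma$-Gröbner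 basis of $I\cap\widehat P$. *)

From HB Require Import structures.
From mathcomp Require Import all_boot all_order all_algebra.
From mathcomp Require Import mpoly.
Set Implicit Arguments. Unset Strict Implicit. Unset Printing Implicit Defensive.
Import GRing.Theory.
Local Open Scope ring_scope.

Section GroebnerDefs.
Variables (K : fieldType) (n : nat).
Local Notation P := {mpoly K[n]}.
Local Notation mono := 'X_{1..n}.

Definition term_ordering (le : rel mono) : Prop :=
  [/\ reflexive le, antisymmetric le, transitive le & total le] /\
  (forall m : mono, le 0%MM m) /\
  (forall m1 m2 m : mono, le m1 m2 -> le (m1 + m)%MM (m2 + m)%MM).

Definition LT (le : rel mono) (f : P) : mono :=
  foldr (fun m acc => if le acc m then m else acc) 0%MM (msupp f).
Definition LC (le : rel mono) (f : P) : K := f@_(LT le f).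

Definition is_ideal (I : P -> Prop) : Prop :=
  [/\ I 0, (forall a b, I a -> I b -> I (a + b)) &
      (forall a b, I b -> I (a * b))].

(* The maximal ideal M = <x_1,...,x_n>: zero constant coefficient. *)
Definition in_M (f : P) : Prop := f@_0%MM = 0.

Definition indets (f : P) : pred 'I_n :=
  fun i => has (fun m : mono => 0 < m i)%N (msupp f).

(* Coefficient of the indeterminate x_i in f (i.e. in Lin_M(f)). *)
Definition lin_coef (i : 'I_n) (f : P) : K := f@_(U_(i))%MM.

Definition tail (i : 'I_n) (f : P) : P := 'X_i - (lin_coef i f)^-1 *: f.

(* f is x_i-separating (this includes f in M and x_i in indets(Lin_M f)). *)
Definition separating (i : 'I_n) (f : P) : Prop :=
  [/\ in_M f, lin_coef i f != 0 & ~~ indets (tail i f) i].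

Section WithZ.
Variables (s : nat) (z : 'I_s -> 'I_n).

(* membership in hat P = K[X \ Z] *)
Definition in_Phat (f : P) : Prop := forall j : 'I_s, ~~ indets f (z j).

Definition coh_separating (f : 'I_s -> P) : Prop :=
  forall i : 'I_s, [/\ f i != 0, in_M (f i), separating (z i) (f i) &
    forall j : 'I_s, j != i -> ~~ indets (f j) (z i)].

(* sigma-Groebner basis of an ideal J (G subset J and LT(J) = <LT(G)>) *)
Definition groebner (le : rel mono) (J : P -> Prop) (G : seq P) : Prop :=
  (forall g, g \in G -> J g) /\
  (forall h, J h -> h != 0 ->
     exists2 g, g \in G & (g != 0) && lem (LT le g) (LT le h)).

(* reduced sigma-Groebner basis: monic, leading terms form a minimal system
   of generators of LT(J), and no non-leading term of an element lies in LT(J). *)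
Definition reduced_groebner (le : rel mono) (J : P -> Prop) (G : seq P) : Prop :=
  groebner le J G /\
  (forall g, g \in G ->
    [/\ LC le g = 1,
        (forall g', g' \in G -> g' != g -> ~~ lem (LT le g') (LT le g)) &
        (forall m, m \in msupp g -> m != LT le g ->
           forall g', g' \in G -> ~~ lem (LT le g') m)]).

Definition Zsep_term_ordering (le : rel mono) (I : P -> Prop) : Prop :=
  exists f : 'I_s -> P,
    (forall i, [/\ I (f i), f i != 0 & LT le (f i) = U_(z i)%MM]) /\
    coh_separating f.

(* {f_1/c_1,...,f_s/c_s, g_1,...,g_t} is a Z-separating sigma-Groebner basis
   of I; the g_j form the reduced hat-sigma-Groebner basis of I cap hat P
   (hat sigma = restriction of le to the terms of hat P). *)
Definition Zsep_groebner (le : rel mono) (I : P -> Prop)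
    (f : 'I_s -> P) (g : seq P) : Prop :=
  [/\ coh_separating f,
      (forall i, LT le (f i) = U_(z i)%MM),
      reduced_groebner le (fun p => I p /\ in_Phat p) g &
      groebner le I ([seq (LC le (f i))^-1 *: f i | i <- enum 'I_s] ++ g)].

Definition phi_images (f : 'I_s -> P) : n.-tuple P :=
  [tuple match [pick j | z j == i] with
         | Some j => tail (z j) (f j)
         | None => 'X_i
         end | i < n].

Definition phi (f : 'I_s -> P) (p : P) : P := p \mPo phi_images f.

End WithZ.
End GroebnerDefs.

From HB Require Import structures.
From mathcomp Require Import all_boot all_order all_algebra.
From mathcomp Require Import mpoly.
From mathcomp Require Import ring.
Import GRing.Theory.
Local Open Scope ring_scope.
Set Implicit Arguments. Unset Strict Implicit.

(* The substitution phi replaces each z_j by tail_{z_j}(f_j) and fixes the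
   other indeterminates.  Three facts about it carry the whole theorem:
   (1) phi(p) lies in hat P: the polynomials not involving a given
       indeterminate form a subring, and by coherent separation no
       tail_{z_j}(f_j) and no y_i involves any z_k;
   (2) p - phi(p) lies in I: z_j - tail_{z_j}(f_j) = f_j / c_j lies in I, and
       a substitution congruent to the identity modulo an ideal is congruent
       to the identity on every polynomial;
   (3) phi is the identity on hat P.
   Parts (a), (b) and the first half of (c) are immediate consequences of
   (1)-(3), since (2) says phi(p) is a representative of p + I.  For the
   second half of (c) we show that the reduced sigma-Groebner basis G of I
   splits into the s elements with leading terms z_1, ..., z_s (they exist
   because sigma is Z-separating, and reducedness forces them to be
   coherently Z-separating) and the remaining elements, which form the
   reduced hat-sigma-Groebner basis of I cap hat P. *)

Section NotInvolving.
Variables (K : fieldType) (n : nat) (i : 'I_n).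
Implicit Types (p q : {mpoly K[n]}).

Lemma notin_indets_sub p (r : seq 'X_{1..n}) :
  {subset msupp p <= r} -> ~~ has (fun m : 'X_{1..n} => 0 < m i)%N r ->
  ~~ indets p i.
Proof. by move=> sub; apply: contra => /hasP [m /sub mr hm]; apply/hasP; exists m. Qed.

Lemma notin_indets0 : ~~ indets (0 : {mpoly K[n]}) i.
Proof. by rewrite /indets msupp0. Qed.

Lemma notin_indets1 : ~~ indets (1 : {mpoly K[n]}) i.
Proof. by rewrite /indets msupp1 /= mnm0E ltnn. Qed.

Lemma notin_indetsX (k : 'I_n) : k != i -> ~~ indets ('X_k : {mpoly K[n]}) i.
Proof. by move=> hki; rewrite /indets msuppX /= mnm1E (negbTE hki) orbF. Qed.

Lemma notin_indetsD p q : ~~ indets p i -> ~~ indets q i -> ~~ indets (p + q) i.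
Proof.
move=> hp hq; apply: (notin_indets_sub (@msuppD_le _ _ p q)).
by rewrite has_cat negb_or hp hq.
Qed.

Lemma notin_indetsZ c p : ~~ indets p i -> ~~ indets (c *: p) i.
Proof. exact: notin_indets_sub (@msuppZ_le _ _ c p). Qed.

Lemma notin_indetsB p q : ~~ indets p i -> ~~ indets q i -> ~~ indets (p - q) i.
Proof.
by move=> hp hq; rewrite -scaleN1r; apply: notin_indetsD => //; apply: notin_indetsZ.
Qed.

Lemma notin_indetsM p q : ~~ indets p i -> ~~ indets q i -> ~~ indets (p * q) i.
Proof.
move=> hp hq; apply/hasP => -[m /msuppM_le /allpairsP [[m1 m2] /= [h1 h2 ->]]].
rewrite mnmDE addn_gt0 => /orP [] hpos.
- by move/hasP: hp; apply; exists m1.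
- by move/hasP: hq; apply; exists m2.
Qed.

Lemma notin_indets_comp p (t : n.-tuple {mpoly K[n]}) :
  (forall k, ~~ indets (tnth t k) i) -> ~~ indets (p \mPo t) i.
Proof.
move=> ht; rewrite comp_mpolyEX.
apply: (big_ind (fun q => ~~ indets q i)) => [||m _];
  [exact: notin_indets0 | exact: notin_indetsD |].
apply: notin_indetsZ; rewrite comp_mpolyX.
apply: (big_ind (fun q => ~~ indets q i)) => [||k _];
  [exact: notin_indets1 | exact: notin_indetsM |].
by elim: (m k) => [|e ih]; rewrite ?expr0 ?notin_indets1 // exprS notin_indetsM.
Qed.

End NotInvolving.

Lemma comp_mpoly_id_on (K : fieldType) (n : nat) (p : {mpoly K[n]})
    (t : n.-tuple {mpoly K[n]}) :
  (forall m i, m \in msupp p -> (0 < m i)%N -> tnth t i = 'X_i) -> p \mPo t = p.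
Proof.
move=> ht; rewrite comp_mpolyEX [RHS]mpolyE; apply: eq_big_seq => m hm.
congr (_ *: _); rewrite comp_mpolyX mpolyXE_id; apply: eq_bigr => i _.
by case: (posnP (m i)) => [->|hi]; rewrite ?expr0 ?(ht m i hm hi).
Qed.

Section Congruence.
Variables (K : fieldType) (n : nat) (I : {mpoly K[n]} -> Prop).
Hypothesis hI : is_ideal I.
Implicit Types (a b : {mpoly K[n]}).

Lemma ideal0 : I 0. Proof. by case: hI. Qed.
Lemma idealD a b : I a -> I b -> I (a + b). Proof. by case: hI => _ h _; apply: h. Qed.
Lemma idealM a b : I b -> I (a * b). Proof. by case: hI => _ _ h; apply: h. Qed.
Lemma idealB a b : I a -> I b -> I (a - b).
Proof. by move=> ha hb; rewrite -mulN1r; apply: idealD => //; apply: idealM. Qed.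

Definition congr_mod a b := I (a - b).

Lemma congr_mod_refl a : congr_mod a a.
Proof. by rewrite /congr_mod subrr; exact: ideal0. Qed.

Lemma congr_modD a1 b1 a2 b2 :
  congr_mod a1 b1 -> congr_mod a2 b2 -> congr_mod (a1 + a2) (b1 + b2).
Proof.
rewrite /congr_mod => h1 h2.
have -> : a1 + a2 - (b1 + b2) = (a1 - b1) + (a2 - b2) by ring.
exact: idealD.
Qed.

Lemma congr_modM a1 b1 a2 b2 :
  congr_mod a1 b1 -> congr_mod a2 b2 -> congr_mod (a1 * a2) (b1 * b2).
Proof.
rewrite /congr_mod => h1 h2.
have -> : a1 * a2 - b1 * b2 = a2 * (a1 - b1) + b1 * (a2 - b2) by ring.
by apply: idealD; apply: idealM.
Qed.

Lemma congr_modZ c a b : congr_mod a b -> congr_mod (c *: a) (c *: b).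
Proof. by rewrite /congr_mod -scalerBr -mul_mpolyC; apply: idealM. Qed.

Lemma congr_mod_comp p (t : n.-tuple {mpoly K[n]}) :
  (forall i, congr_mod 'X_i (tnth t i)) -> congr_mod p (p \mPo t).
Proof.
move=> ht; rewrite comp_mpolyEX {1}[p]mpolyE.
apply: (big_ind2 congr_mod); [exact: congr_mod_refl | exact: congr_modD |] => m _.
apply: congr_modZ; rewrite comp_mpolyX {1}mpolyXE_id.
apply: (big_ind2 congr_mod); [exact: congr_mod_refl | exact: congr_modM |] => i _.
elim: (m i) => [|e ih]; first by rewrite !expr0; exact: congr_mod_refl.
by rewrite !exprS; apply: congr_modM.
Qed.

End Congruence.

Section PhiProperties.
Variables (K : fieldType) (n s : nat) (z : 'I_s -> 'I_n) (le : rel 'X_{1..n}).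
Variable f : 'I_s -> {mpoly K[n]}.

(* (2) p = phi(p) mod I whenever each f_j / c_j lies in I and has leading
   term z_j, because then z_j - tail_{z_j}(f_j) = f_j / c_j. *)
Lemma phi_congr (I : {mpoly K[n]} -> Prop) : is_ideal I ->
  (forall j, I ((LC le (f j))^-1 *: f j)) -> (forall j, LT le (f j) = U_(z j)%MM) ->
  forall p, I (p - phi z f p).
Proof.
move=> hI hf hLT p; apply: (congr_mod_comp hI) => i; rewrite /congr_mod tnth_mktuple.
case: pickP => [j /eqP <- | _]; last by rewrite subrr; exact: ideal0.
by have := hf j; rewrite /LC hLT /tail /lin_coef opprB addrC subrK.
Qed.

Lemma phi_in_Phat : injective z -> coh_separating z f -> forall p, in_Phat z (phi z f p).
Proof.
move=> hz hcoh p k; apply: notin_indets_comp => i; rewrite tnth_mktuple.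
case: pickP => [j /eqP hj | hnone]; last first.
  by apply: notin_indetsX; rewrite eq_sym hnone.
have [_ _ [_ _ sep_k] avoid_k] := hcoh k.
case: (eqVneq j k) => [-> // | hjk].
apply: notin_indetsB; first by apply: notin_indetsX; rewrite (inj_eq hz).
exact/notin_indetsZ/avoid_k.
Qed.

Lemma phi_id_Phat q : in_Phat z q -> phi z f q = q.
Proof.
move=> hq; apply: comp_mpoly_id_on => m i hm hi; rewrite tnth_mktuple.
case: pickP => [j /eqP hj | //].
by exfalso; move/negP: (hq j); apply; apply/hasP; exists m; rewrite ?hj.
Qed.

End PhiProperties.

Lemma Zsep_groebner_phi (K : fieldType) (n s : nat) (I : {mpoly K[n]} -> Prop)
    (z : 'I_s -> 'I_n) (le : rel 'X_{1..n}) (f : 'I_s -> {mpoly K[n]})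
    (g : seq {mpoly K[n]}) :
  is_ideal I -> injective z -> Zsep_groebner z le I f g ->
  (forall p, I (p - phi z f p)) /\ (forall p, in_Phat z (phi z f p)).
Proof.
move=> hI hz [hcoh hLT _ [inI _]]; split; last exact: phi_in_Phat.
apply: phi_congr hLT => // j; apply: inI; rewrite mem_cat.
by rewrite (map_f (fun i => (LC le (f i))^-1 *: f i)) ?mem_enum.
Qed.

Lemma LT_msupp (K : fieldType) (n : nat) (le : rel 'X_{1..n}) (p : {mpoly K[n]}) :
  (forall m, le 0%MM m) -> p != 0 -> LT le p \in msupp p.
Proof.
rewrite -msupp_eq0 /LT => hle0; elim: (msupp p) => [//|x r ih] _ /=.
case: r ih => [|y r] ih /=; first by rewrite hle0 inE.
by case: ifP => _; rewrite inE ?eqxx // ih ?orbT.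
Qed.

Lemma lem_U_cases (n : nat) (m : 'X_{1..n}) (i : 'I_n) :
  lem m U_(i)%MM -> m = 0%MM \/ m = U_(i)%MM.
Proof.
move/mnm_lepP => h; case: (posnP (m i)) => hi; [left|right]; apply/mnmP => k;
  rewrite ?mnm0E ?mnm1E; have := h k; rewrite mnm1E; case: eqP => [<-|_] /=.
- by rewrite hi.
- by rewrite leqn0 => /eqP.
- by move=> h1; apply/eqP; rewrite eqn_leq h1.
- by rewrite leqn0 => /eqP.
Qed.

Section ReducedBasis.
Variables (K : fieldType) (n s : nat) (I : {mpoly K[n]} -> Prop).
Variables (z : 'I_s -> 'I_n) (le : rel 'X_{1..n}) (G : seq {mpoly K[n]}).
Hypothesis in_M_of_I : forall p, I p -> in_M p.
Hypothesis hz : injective z.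
Hypothesis hle0 : forall m, le 0%MM m.
Hypothesis hsep : Zsep_term_ordering z le I.
Hypothesis hG : reduced_groebner le I G.

Let G_in_I x : x \in G -> I x. Proof. by case: hG => -[inI _] _; exact: inI. Qed.
Let G_monic x : x \in G -> LC le x = 1. Proof. by case: hG => _ /(_ x) h /h[]. Qed.

Let G_minimal x y : x \in G -> y \in G -> y != x -> ~~ lem (LT le y) (LT le x).
Proof. by case: hG => _ /(_ x) h /h[_ hmin _] /hmin. Qed.

(* Some element of G has leading term z_j: it is a divisor of z_j, and not
   1 since G is monic and I lies in M. *)
Lemma reduced_has_LT_var j : has (fun x => LT le x == U_(z j)%MM) G.
Proof.
have [F [hF _]] := hsep; have [FI F0 FLT] := hF j.
case: hG => -[_ cover] _; have [x xG /andP [_]] := cover _ FI F0.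
rewrite FLT => /lem_U_cases [hx|hx]; last by apply/hasP; exists x; rewrite ?hx.
have := in_M_of_I (G_in_I xG); rewrite /in_M -hx.
by have := G_monic xG; rewrite /LC => -> /eqP; rewrite oner_eq0.
Qed.

Definition var_elt (j : 'I_s) : {mpoly K[n]} :=
  nth 0 G (find (fun x => LT le x == U_(z j)%MM) G).

Lemma var_elt_mem j : var_elt j \in G.
Proof. by rewrite mem_nth // -has_find reduced_has_LT_var. Qed.

Lemma var_elt_LT j : LT le (var_elt j) = U_(z j)%MM.
Proof. exact/eqP/(nth_find 0 (reduced_has_LT_var j)). Qed.

Lemma var_elt_coef j : (var_elt j)@_(U_(z j)%MM) = 1.
Proof. by rewrite -(G_monic (var_elt_mem j)) /LC var_elt_LT. Qed.

Lemma var_elt_uniq x j : x \in G -> LT le x = U_(z j)%MM -> x = var_elt j.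
Proof.
move=> xG hx; case: (eqVneq (var_elt j) x) => [// | hne].
exfalso; move/negP: (G_minimal xG (var_elt_mem j) hne); apply.
by rewrite var_elt_LT hx lepm_refl.
Qed.

(* Reducedness: no non-leading term of an element of G involves any z_j,
   since z_j = LT(var_elt j) would divide it. *)
Lemma reduced_tail_free x m j :
  x \in G -> m \in msupp x -> m != LT le x -> m (z j) = 0%N.
Proof.
case: hG => _ /(_ x) h /h[_ _ hnl] hm hmL; apply/eqP; rewrite -leqn0 leqNgt.
apply: contra (hnl m hm hmL _ (var_elt_mem j)) => hpos.
by rewrite var_elt_LT lep1mP -lt0n.
Qed.

Definition rest_elts : seq {mpoly K[n]} :=
  [seq x <- G | ~~ [exists j, LT le x == U_(z j)%MM]].

(* They lie in hat P: their leading term is divisible by no z_j (it would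
   then be divisible by LT(var_elt j) = z_j), and their other terms avoid the
   z_j by reducedness. *)
Lemma rest_elts_in_Phat x : x \in rest_elts -> in_Phat z x.
Proof.
rewrite mem_filter => /andP [notvar xG] j; apply/hasP => -[m hm hpos].
case: (eqVneq m (LT le x)) => [hmL|hmL]; last first.
  by move: hpos; rewrite (reduced_tail_free j xG hm hmL).
have hne : var_elt j != x.
  by apply: contraNneq notvar => <-; apply/existsP; exists j; rewrite var_elt_LT.
by move/negP: (G_minimal xG (var_elt_mem j) hne); rewrite var_elt_LT lep1mP -lt0n -hmL.
Qed.

Lemma reduced_split : G =i [seq var_elt i | i <- enum 'I_s] ++ rest_elts.
Proof.
move=> x; rewrite mem_cat mem_filter; apply/idP/idP => [xG|].
  case: existsP => [[j /eqP hj] | _]; last by rewrite xG orbT.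
  by rewrite (var_elt_uniq xG hj) map_f ?mem_enum.
by case/orP => [/mapP [j _ ->] | /andP [_ ->]]; rewrite ?var_elt_mem.
Qed.

(* (var_elt j)_j is coherently Z-separating: apart from z_i, the terms of
   var_elt i are non-leading, hence avoid every z_j by reducedness. *)
Lemma var_elt_coh : coh_separating z var_elt.
Proof.
have inM i := in_M_of_I (G_in_I (var_elt_mem i)).
move=> i; split => //.
- by apply: contra_neq (oner_neq0 K) => h0; rewrite -(var_elt_coef i) h0 mcoeff0.
- split; rewrite // /lin_coef ?var_elt_coef ?oner_neq0 //.
  rewrite /tail /lin_coef var_elt_coef invr1 scale1r; apply/hasP => -[m hm hpos].
  case: (eqVneq m U_(z i)%MM) => [hmU|hmU].
    by move: hm; rewrite mcoeff_msupp mcoeffB mcoeffX hmU eqxx var_elt_coef subrr eqxx.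
  move: (msuppB_le hm); rewrite mem_cat msuppX inE (negbTE hmU) /= => hmf.
  by move: hpos; rewrite (reduced_tail_free i (var_elt_mem i) hmf) ?var_elt_LT.
- move=> j hji; apply/hasP => -[m hm hpos].
  case: (eqVneq m (LT le (var_elt j))) => [hmL|hmL].
    by move: hpos; rewrite hmL var_elt_LT mnm1E (inj_eq hz) (negbTE hji).
  by move: hpos; rewrite (reduced_tail_free i (var_elt_mem j) hm hmL).
Qed.

(* The remaining elements form the reduced hat-sigma-Groebner basis of
   I cap hat P: a leading term of an element of hat P is divisible by no z_j,
   hence only by leading terms of the remaining elements. *)
Lemma rest_elts_reduced :
  reduced_groebner le (fun p => I p /\ in_Phat z p) rest_elts.
Proof.
have rest_G x : x \in rest_elts -> x \in G by rewrite mem_filter => /andP[].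
case: hG => -[_ cover] hred; split; first split.
- by move=> x hx; split; [exact/G_in_I/rest_G | exact: rest_elts_in_Phat].
- move=> h [hIh hPh] h0; have [x xG /andP [x0 hl]] := cover h hIh h0.
  exists x; last by rewrite x0.
  rewrite mem_filter xG andbT; apply/existsP => -[j /eqP hj].
  move: hl; rewrite hj lep1mP -lt0n => hpos.
  by move/negP: (hPh j); apply; apply/hasP; exists (LT le h); rewrite ?LT_msupp.
- move=> x /rest_G /hred [monic minimal tails].
  split=> // [y /rest_G | m hm hmL y /rest_G]; [exact: minimal | exact: tails].
Qed.

Lemma reduced_is_Zsep :
  exists (f' : 'I_s -> {mpoly K[n]}) (g' : seq {mpoly K[n]}),
    Zsep_groebner z le I f' g' /\
    G =i [seq (LC le (f' i))^-1 *: f' i | i <- enum 'I_s] ++ g'.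
Proof.
have normalized : [seq (LC le (var_elt i))^-1 *: var_elt i | i <- enum 'I_s] =
                  [seq var_elt i | i <- enum 'I_s].
  by apply: eq_map => i; rewrite G_monic ?var_elt_mem // invr1 scale1r.
exists var_elt, rest_elts; rewrite normalized; split; last exact: reduced_split.
split; [exact: var_elt_coh | exact: var_elt_LT | exact: rest_elts_reduced |].
rewrite normalized; case: hG => -[inI cover] _; split => [x | h hIh h0].
- by rewrite -reduced_split; exact: inI.
- by have [x xG hx] := cover h hIh h0; exists x; rewrite -?reduced_split.
Qed.

End ReducedBasis.

Theorem theorem2p13 (K : fieldType) (n s : nat) (I : {mpoly K[n]} -> Prop)
    (z : 'I_s -> 'I_n) (le : rel 'X_{1..n})
    (f : 'I_s -> {mpoly K[n]}) (g : seq {mpoly K[n]}) :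
  is_ideal I -> (forall p, I p -> in_M p) ->
  injective z ->
  term_ordering le ->
  Zsep_term_ordering z le I ->
  Zsep_groebner z le I f g ->
  [/\
   (* (a) phi maps P into hat P and induces an isomorphism
          P/I -> hat P/(I cap hat P): well defined and injective ... *)
   (forall p, in_Phat z (phi z f p)) /\
   (forall p, I p <-> (I (phi z f p) /\ in_Phat z (phi z f p))) /\
   (* ... and surjective *)
   (forall q, in_Phat z q -> exists p, I (phi z f p - q)),
   (* (b) the inverse is induced by the inclusion hat P -> P, y_i |-> y_i *)
   (forall q, in_Phat z q -> I (phi z f q - q)) /\
   (forall p, I (p - phi z f p)),
   (* (c) independence of the Z-separating sigma-Groebner basis ... *)
   (forall (f' : 'I_s -> {mpoly K[n]}) (g' : seq {mpoly K[n]}),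
      Zsep_groebner z le I f' g' ->
      forall p, I (phi z f' p - phi z f p) /\ in_Phat z (phi z f' p - phi z f p)) &
   (* ... and the reduced sigma-Groebner basis of I is Z-separating *)
   (forall G : seq {mpoly K[n]}, reduced_groebner le I G ->
      exists (f' : 'I_s -> {mpoly K[n]}) (g' : seq {mpoly K[n]}),
        Zsep_groebner z le I f' g' /\
        G =i [seq (LC le (f' i))^-1 *: f' i | i <- enum 'I_s] ++ g')].
Proof.
move=> hI in_M_of_I hz [_ [hle0 _]] hsep hfg.
have [p_congr phi_Phat] := Zsep_groebner_phi hI hz hfg.
have phi_repr q : in_Phat z q -> I (phi z f q - q).
  by move=> hq; rewrite phi_id_Phat // subrr; exact: ideal0.
split=> [|//|f' g' hfg' p|G /(reduced_is_Zsep in_M_of_I hz hle0 hsep)//].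
- split=> //; split=> [p|q hq]; last by exists q; exact: phi_repr.
  split=> [hp | [hp _]]; first split=> //.
    by rewrite -(subKr p (phi z f p)); exact: idealB.
  by rewrite -(subrK (phi z f p) p) addrC; exact: idealD.
- have [p_congr' phi'_Phat] := Zsep_groebner_phi hI hz hfg'.
  split=> [|k]; last by apply: notin_indetsB; [exact: phi'_Phat | exact: phi_Phat].
  have -> : phi z f' p - phi z f p = (p - phi z f p) - (p - phi z f' p) by ring.
  exact: idealB.
Qed.
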